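(* Let $V$ be a finite set, let $d\ge 1$, let $R=(\le_1,\ldots,\le_d)$ be a $d$-representation on $V$, and let $R'=(\le_1,\ldots,\le_{d-1})$. Then the Hasse diagram of the inclusion poset of $\Sigma(R)\setminus\Sigma(R')$ admits a complete acyclic matching.
   Context: A $k$-representation on $V$ is a family of $k$ linear orders on $V$. For a linear order $\le$ on $V$, $x\in V$ and $F\subseteq V$, $x$ dominates $F$ in $\le$ if $f\le x$ for all $f\in F$; $x$ dominates $F$ in a representation if it dominates $F$ in at least one of its orders. For a representation $S$ on $V$, the supremum section $\Sigma(S)$ is the set of subsets $F\subseteq V$ such that every $v\in V$ dominates $F$ in $S$. When $d=1$, $R'$ has no orders and the same definition applies. The Hasse diagram of a finite poset $(P,\le)$ is the digraph with an arc $(u,w)$ whenever $w<u$ and there is no $z$ with $w<z<u$ (the transitive reduction). A matching $M$ of the Hasse diagram is a set of arcs no two sharing an endpoint; it is complete (perfect) if every element of $P$ is an endpoint of an arc of $M$; it is acyclic if the digraph obtained from the Hasse diagram by reversing the orientation of the arcs in $M$ has no directed cycle. *)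

From mathcomp Require Import all_boot.
Set Implicit Arguments. Unset Strict Implicit. Unset Printing Implicit Defensive.

Section Defs.
Variable V : finType.

Definition linear_order (le : rel V) : Prop :=
  [/\ reflexive le, antisymmetric le, transitive le & total le].

Definition representation (k : nat) (R : 'I_k -> rel V) : Prop :=
  forall i, linear_order (R i).

Definition dominates_in (le : rel V) (x : V) (F : {set V}) : bool :=
  [forall f in F, le f x].

Definition dominates (k : nat) (R : 'I_k -> rel V) (x : V) (F : {set V}) : bool :=
  [exists i : 'I_k, dominates_in (R i) x F].

Definition sup_section (k : nat) (R : 'I_k -> rel V) : {set {set V}} :=
  [set F : {set V} | [forall v : V, dominates R v F]].

Definition drop_last (k : nat) (R : 'I_k -> rel V) : 'I_(k.-1) -> rel V :=
  fun i => R (widen_ord (leq_pred k) i).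

Definition hasse_arc (P : {set {set V}}) (u w : {set V}) : bool :=
  [&& u \in P, w \in P, w \proper u &
      ~~ [exists z in P, (w \proper z) && (z \proper u)]].

Definition is_matching (P : {set {set V}}) (M : {set {set V} * {set V}}) : Prop :=
  (forall a, a \in M -> hasse_arc P a.1 a.2) /\
  (forall a b, a \in M -> b \in M -> a != b ->
     [/\ a.1 != b.1, a.1 != b.2, a.2 != b.1 & a.2 != b.2]).

Definition complete_matching (P : {set {set V}}) (M : {set {set V} * {set V}}) : Prop :=
  forall x, x \in P -> exists2 a, a \in M & (x == a.1) || (x == a.2).

Definition reversed_digraph (P : {set {set V}}) (M : {set {set V} * {set V}}) : rel {set V} :=
  fun x y => (hasse_arc P x y && ((x, y) \notin M)) || ((y, x) \in M).

Definition acyclic_matching (P : {set {set V}}) (M : {set {set V} * {set V}}) : Prop :=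
  ~ exists (x : {set V}) (s : seq {set V}),
      [/\ s != [::], path (reversed_digraph P M) x s & last x s = x].

End Defs.

From mathcomp Require Import all_boot.
From mathcomp Require Import zify.
Set Implicit Arguments. Unset Strict Implicit. Unset Printing Implicit Defensive.

(* Let L be the last order and N(F) the set of vertices that dominate F in none
   of the first d-1 orders. Then F is in Sigma(R) minus Sigma(R') iff N(F) is
   nonempty and all of N(F) dominates F in L. A vertex of N(F) is irrelevant to
   domination in the first d-1 orders, and the L-least vertex u(F) of N(F) is
   irrelevant in L for the vertices of N(F); so toggling u(F) in F changes
   neither N(F) nor u(F) and stays in the family, and pairing F with F toggled
   at u(F) is a complete matching. N only grows with F and u is constant where
   N is, so a potential ordered first by |N(F)| strictly decreases along every
   arc of the reoriented Hasse diagram. *)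

Lemma head_sort_min (T : eqType) (le : rel T) (x0 : T) (s : seq T) :
  transitive le -> total le -> s != [::] ->
  head x0 (sort le s) \in s /\ {in s, forall y, le (head x0 (sort le s)) y}.
Proof.
move=> le_trans le_total s_neq0.
have mem_s := mem_sort le s; have := sort_sorted le_total s.
case def_s': (sort le s) mem_s => [|x s'] mem_s.
  by move: s_neq0; rewrite -size_eq0 -(size_sort le) def_s'.
move=> /= /(order_path_min le_trans) min_x; split; first by rewrite -mem_s mem_head.
move=> y; rewrite -mem_s inE => /predU1P [->|/(allP min_x)] //.
by have /orP [] := le_total x x.
Qed.

Lemma no_cycle_of_potential (T : eqType) (e : rel T) (f : T -> nat) :
  (forall x y, e x y -> f y < f x) ->
  ~ exists x s, [/\ s != [::], path e x s & last x s = x].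
Proof.
move=> e_dec [x [s [s_neq0 e_xs last_x]]].
have lt_trans : transitive (fun a b : T => f b < f a).
  by move=> b a c /= lt_ba lt_cb; exact: ltn_trans lt_cb lt_ba.
have /(order_path_min lt_trans)/allP lt_x := sub_path e_dec e_xs.
case: s s_neq0 e_xs last_x lt_x => [//|y s] _ _ last_x lt_x.
by have := lt_x _ (mem_last y s); rewrite -[last y s]/(last x (y :: s)) last_x ltnn.
Qed.

Section Domination.
Variable V : finType.
Implicit Types (le : rel V) (x v : V) (F G : {set V}).

Lemma dominates_in_subset le v F G :
  F \subset G -> dominates_in le v G -> dominates_in le v F.
Proof. by move=> /subsetP sFG /forall_inP dom_G; apply/forall_inP => f /sFG /dom_G. Qed.

Lemma dominates_subset k (R : 'I_k -> rel V) v F G :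
  F \subset G -> dominates R v G -> dominates R v F.
Proof.
by move=> sFG /existsP [i dom_G]; apply/existsP; exists i; exact: dominates_in_subset dom_G.
Qed.

Section NonDominating.
Variables (le : rel V) (x : V) (F : {set V}).
Hypotheses (le_linear : linear_order le) (x_ndom : ~~ dominates_in le x F).

Let witness : exists2 f, f \in F & (f != x) && le x f.
Proof.
have [le_refl _ _ le_total] := le_linear.
move: x_ndom; rewrite negb_forall_in => /exists_inP [f fF nle_fx].
exists f => //; apply/andP; split; first by apply: contraNneq nle_fx => ->.
by have /orP [] := le_total f x; rewrite ?(negbTE nle_fx).
Qed.

Lemma dominates_inU1 v : dominates_in le v (x |: F) = dominates_in le v F.
Proof.
have [_ _ le_trans _] := le_linear; have [f fF /andP [_ le_xf]] := witness.
apply/idP/idP => [|dom_F]; first exact/dominates_in_subset/subsetUr.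
apply/forall_inP => g /setU1P [->|gF]; last exact: (forall_inP dom_F).
exact: le_trans le_xf (forall_inP dom_F f fF).
Qed.

Lemma dominates_inD1 v : dominates_in le v (F :\ x) = dominates_in le v F.
Proof.
have [_ _ le_trans _] := le_linear; have [f fF /andP [fx le_xf]] := witness.
apply/idP/idP => [dom_Fx|]; last exact/dominates_in_subset/subD1set.
have le_fv : le f v by apply: (forall_inP dom_Fx); rewrite !inE fx.
apply/forall_inP => g gF; have [->|gx] := eqVneq g x; first exact: le_trans le_fv.
by apply: (forall_inP dom_Fx); rewrite !inE gx.
Qed.

End NonDominating.

Section Representation.
Variables (k : nat) (R : 'I_k -> rel V).
Hypothesis R_rep : representation R.

Lemma dominatesU1 x v F :
  ~~ dominates R x F -> dominates R v (x |: F) = dominates R v F.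
Proof.
by rewrite negb_exists => /forallP x_ndom; apply: eq_existsb => i; rewrite dominates_inU1.
Qed.

Lemma dominatesD1 x v F :
  ~~ dominates R x F -> dominates R v (F :\ x) = dominates R v F.
Proof.
by rewrite negb_exists => /forallP x_ndom; apply: eq_existsb => i; rewrite dominates_inD1.
Qed.

End Representation.

Lemma dominates_drop_last k (R : 'I_k.+1 -> rel V) v F :
  dominates R v F = dominates (drop_last R) v F || dominates_in (R ord_max) v F.
Proof.
apply/existsP/orP => [[i]|[/existsP [j dom_j]|dom_max]]; last by exists ord_max.
- have [j ->|->] := unliftP ord_max i; last by right.
  have -> : lift ord_max j = widen_ord (leq_pred k.+1) j.
    by apply: val_inj; rewrite /= /bump leqNgt ltn_ord.
  by left; apply/existsP; exists j.
- by exists (widen_ord (leq_pred k.+1) j).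
Qed.

Lemma sup_section_void k (R : 'I_k -> rel V) : (V -> False) -> sup_section R = setT.
Proof. by move=> V0; apply/setP => F; rewrite !inE; apply/forallP => v; case: (V0 v). Qed.

End Domination.

Section ToggleMatching.
Variables (V : finType) (P : {set {set V}}) (u : {set V} -> V) (r : {set V} -> nat).
Implicit Types (F G X Y : {set V}).

Hypothesis toggle_closed : forall F, F \in P ->
  [/\ u F |: F \in P, F :\ u F \in P, u (u F |: F) = u F & u (F :\ u F) = u F].
Hypothesis r_mono : forall F G, F \subset G -> r F <= r G.
Hypothesis u_level : forall F G, F \subset G -> r F = r G -> u F = u G.
Hypothesis r_toggle : forall F, F \in P -> r (F :\ u F) = r F.

Definition toggle_matching : {set {set V} * {set V}} :=
  [set p | [&& p.1 \in P, u p.1 \in p.1 & p.2 == p.1 :\ u p.1]].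

Lemma toggle_matchingP X Y : (X, Y) \in toggle_matching ->
  [/\ X \in P, u X \in X, Y = X :\ u X & u Y = u X].
Proof.
rewrite inE /= => /and3P [XP uX /eqP ->]; have [_ _ _ ->] := toggle_closed XP.
by split.
Qed.

Lemma toggle_matching_hasse X Y :
  (X, Y) \in toggle_matching -> hasse_arc P X Y.
Proof.
move=> /toggle_matchingP [XP uX -> _]; have [_ XuP _ _] := toggle_closed XP.
rewrite /hasse_arc XP XuP properD1 //=; apply/exists_inP => -[Z _ /andP [ltXZ ltZX]].
have := leq_ltn_trans (proper_card ltXZ) (proper_card ltZX).
by rewrite (cardsD1 (u X) X) uX ltnn.
Qed.

Lemma toggle_matching_matching : is_matching P toggle_matching.
Proof.
split=> [[X Y] /toggle_matching_hasse //|[X Y] [X' Y'] /= mXY mXY' neq].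
have [XP uX defY uY] := toggle_matchingP mXY.
have [X'P uX' defY' uY'] := toggle_matchingP mXY'.
have uY_notin : u Y \notin Y by rewrite uY defY !inE eqxx.
have uY'_notin : u Y' \notin Y' by rewrite uY' defY' !inE eqxx.
split; apply/eqP => eq_ends.
- by move: neq; rewrite -eq_ends defY defY' eq_ends eqxx.
- by move: uY'_notin; rewrite -eq_ends uX.
- by move: uY_notin; rewrite eq_ends uX'.
- move: neq; rewrite -eq_ends; suff -> : X = X' by rewrite eqxx.
  have eq_u : u X = u X' by rewrite -uY -uY' eq_ends.
  by rewrite -(setD1K uX) -defY eq_ends defY' eq_u setD1K.
Qed.

Lemma toggle_matching_complete : complete_matching P toggle_matching.
Proof.
move=> F FP; have [uFP _ uuF _] := toggle_closed FP.
have [uF|uF] := boolP (u F \in F).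
- by exists (F, F :\ u F); rewrite ?eqxx // inE /= FP uF eqxx.
- exists (u F |: F, F); last by rewrite eqxx orbT.
  by rewrite inE /= uFP uuF setU11 setU1K ?eqxx.
Qed.

Lemma hasse_arc_setD1 X Y : hasse_arc P X Y ->
  u X \in X -> u X \notin Y -> Y = X :\ u X.
Proof.
move=> /and4P [XP _ ltYX /exists_inPn no_mid] uX uY.
have [_ XuP _ _] := toggle_closed XP.
have sYXu : Y \subset X :\ u X.
  by rewrite subsetD1 (proper_sub ltYX).
apply/eqP; apply: contraR (no_mid _ XuP) => neq.
by rewrite properEneq neq sYXu properD1.
Qed.

(* r X is the leading term, as #|X| + 2 < #|V| + 3. Within a level of r,
   unmatched down arcs shrink X without removing u X (else they would be
   matched), and reversed matched arcs add u X but drop the penalty 2. *)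
Definition potential X := (#|V| + 3) * r X + #|X| + 2 * (u X \notin X).

Lemma potential_reversed_digraph X Y :
  reversed_digraph P toggle_matching X Y -> potential Y < potential X.
Proof.
case/orP => [/andP [arcXY unmatched] | /toggle_matchingP [YP uY -> uXY]].
- have [_ _ ltYX _] := and4P arcXY.
  have ltYXc := proper_card ltYX; have leYV : #|Y| <= #|V| := max_card _.
  have le_r := r_mono (proper_sub ltYX).
  have [eq_r|lt_r] := eqVneq (r Y) (r X); last first.
    have {le_r}{}lt_r : r Y < r X by rewrite ltn_neqAle lt_r.
    have : (#|V| + 3) * (r Y).+1 <= (#|V| + 3) * r X by rewrite leq_mul2l lt_r orbT.
    rewrite /potential; case: (u X \notin X); case: (u Y \notin Y); lia.
  rewrite /potential eq_r (u_level (proper_sub ltYX) eq_r).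
  have [uX|uX] := boolP (u X \in X); last first.
    by rewrite (contra (subsetP (proper_sub ltYX) _) uX) ltn_add2r ltn_add2l.
  have [uY'|uY'] := boolP (u X \in Y); first by rewrite ltn_add2r ltn_add2l.
  case/negP: unmatched; rewrite inE /= -(hasse_arc_setD1 arcXY uX uY') eqxx andbT.
  by have [-> _ _ _] := and4P arcXY.
- rewrite /potential uXY r_toggle // (cardsD1 (u Y) Y) uY !inE eqxx /=; lia.
Qed.

Lemma toggle_matching_acyclic : acyclic_matching P toggle_matching.
Proof. exact: no_cycle_of_potential potential_reversed_digraph. Qed.

End ToggleMatching.

Section SupSectionGap.
Variables (V : finType) (d : nat) (R : 'I_d.+1 -> rel V) (v0 : V).
Hypothesis R_rep : representation R.
Implicit Types (x v : V) (F G : {set V}).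

Let L := R ord_max.
Let P := sup_section R :\: sup_section (drop_last R).

Definition nondominators F := [set v | ~~ dominates (drop_last R) v F].

(* v0 is a mere default: nondominators F is nonempty on P. *)
Definition least_nondominator F := head v0 (sort L (enum (nondominators F))).

Lemma mem_sup_section_gap F : (F \in P) =
  (nondominators F != set0) && [forall v in nondominators F, dominates_in L v F].
Proof.
rewrite !inE negb_forall; congr andb.
  by apply/existsP/set0Pn => -[v v_ndom]; exists v; rewrite inE in v_ndom *.
apply/forallP/forall_inP => dom_R v.
  by rewrite inE => /negbTE v_ndom; move: (dom_R v); rewrite dominates_drop_last v_ndom.
by move: (dom_R v); rewrite inE dominates_drop_last; case: dominates => //= ->.
Qed.

Lemma drop_last_representation : representation (drop_last R).
Proof. by move=> i; exact: R_rep. Qed.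

Lemma nondominators_subset F G : F \subset G -> nondominators F \subset nondominators G.
Proof. by move=> sFG; apply/subsetP => v; rewrite !inE; apply/contra/dominates_subset. Qed.

Lemma nondominatorsU1 x F :
  x \in nondominators F -> nondominators (x |: F) = nondominators F.
Proof.
rewrite inE => x_ndom; apply/setP => v.
by rewrite !inE (dominatesU1 drop_last_representation).
Qed.

Lemma nondominatorsD1 x F :
  x \in nondominators F -> nondominators (F :\ x) = nondominators F.
Proof.
rewrite inE => x_ndom; apply/setP => v.
by rewrite !inE (dominatesD1 drop_last_representation).
Qed.

Lemma least_nondominatorP F : nondominators F != set0 ->
  least_nondominator F \in nondominators F /\
  {in nondominators F, forall v, L (least_nondominator F) v}.
Proof.
have [_ _ L_trans L_total] := R_rep ord_max.
rewrite -cards_eq0 cardE size_eq0 => /(head_sort_min v0 L_trans L_total) [].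
rewrite mem_enum => u_in u_min; split=> // v v_in.
by apply: u_min; rewrite mem_enum.
Qed.

Lemma least_nondominator_toggle F : F \in P ->
  let u := least_nondominator in
  [/\ u F |: F \in P, F :\ u F \in P, u (u F |: F) = u F & u (F :\ u F) = u F].
Proof.
rewrite mem_sup_section_gap => /andP [N_neq0 /forall_inP dom_L] u.
have [u_in u_min] := least_nondominatorP N_neq0.
rewrite /u /least_nondominator (nondominatorsU1 u_in) (nondominatorsD1 u_in).
rewrite -/(least_nondominator F) !mem_sup_section_gap.
rewrite (nondominatorsU1 u_in) (nondominatorsD1 u_in) N_neq0; split=> //=.
- apply/forall_inP => v v_in; apply/forall_inP => f /setU1P [->|fF]; first exact: u_min.
  exact: (forall_inP (dom_L v v_in)).
- apply/forall_inP => v v_in.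
  exact: dominates_in_subset (subD1set _ _) (dom_L v v_in).
Qed.

Lemma sup_section_gap_matching : exists M : {set {set V} * {set V}},
  [/\ is_matching P M, complete_matching P M & acyclic_matching P M].
Proof.
pose u := least_nondominator; pose r F := #|nondominators F|.
have r_mono F G : F \subset G -> r F <= r G.
  by move=> /nondominators_subset; exact: subset_leq_card.
have u_level F G : F \subset G -> r F = r G -> u F = u G.
  move=> sFG eq_r; suff /eqP eq_N : nondominators F == nondominators G.
    by rewrite /u /least_nondominator eq_N.
  by rewrite eqEcard nondominators_subset //= -/(r F) eq_r.
have r_toggle F : F \in P -> r (F :\ u F) = r F.
  rewrite mem_sup_section_gap => /andP [/least_nondominatorP [u_in _] _].
  by rewrite /r nondominatorsD1.
exists (toggle_matching P u); split.
- exact/toggle_matching_matching/least_nondominator_toggle.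
- exact/toggle_matching_complete/least_nondominator_toggle.
- exact: toggle_matching_acyclic least_nondominator_toggle r_mono u_level r_toggle.
Qed.

End SupSectionGap.

Theorem lemma4 (V : finType) (d : nat) (R : 'I_d -> rel V) :
  1 <= d -> representation R ->
  exists M : {set {set V} * {set V}},
    let P := sup_section R :\: sup_section (drop_last R) in
    [/\ is_matching P M, complete_matching P M & acyclic_matching P M].
Proof.
case: d R => [//|d] R _ R_rep.
have [v0 _|V0] := pickP (@predT V); first exact: sup_section_gap_matching v0 R_rep.
have V_empty (v : V) : False by have := V0 v.
rewrite /= !sup_section_void // setDv; exists set0; split=> [|F|].
- by split=> [?|? ?]; rewrite inE.
- by rewrite inE.
- apply: (no_cycle_of_potential (f := fun _ => 0)) => X Y.
  by rewrite /reversed_digraph /hasse_arc !inE.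
Qed.
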